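(* Under Assumptions (A1)--(A7) below, let $\mathcal{P}_n^*=\{P_{j,n}^*\}_{j=1}^{k_n}$ be an optimal SMML partition of the countable data space $\mathcal{X}_n$ with codepoints $\{\bm\theta_{j,n}^*\}_{j=1}^{k_n}$, and define the SMML estimator $\hat{\bm\theta}_n^{\mathrm{SMML}}(\mathbf{x})=\sum_{j=1}^{k_n}\bm\theta_{j,n}^*\mathds{1}_{\{\mathbf{x}\in P_{j,n}^*\}}$. Let $\mathbf{X}_n$ be drawn from $p_n(\cdot\mid\bm\theta_0)$ with $\bm\theta_0\in\operatorname{int}(\Theta)$, and fix a compact $K\subset\Theta$ with $\bm\theta_0\in\operatorname{int}(K)$ on which (A5) holds. Then $\hat{\bm\theta}_n^{\mathrm{SMML}}(\mathbf{X}_n)\to\bm\theta_0$ in probability and $$\|\hat{\bm\theta}_n^{\mathrm{SMML}}(\mathbf{X}_n)-\bm\theta_0\|=O_p(n^{-1/2}).$$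
   Context: Setting: $X_1,\dots,X_n$ i.i.d. from a parametric family with per-observation density/mass $f(\cdot\mid\bm\theta)$, $\bm\theta\in\Theta\subseteq\mathbb{R}^p$; a data set $\mathbf{x}=(x_1,\dots,x_n)$ lies in a countable sample space $\mathcal{X}_n$; $p_n(\mathbf{x}\mid\bm\theta)$ is the joint likelihood; $\pi$ is a prior density; $r_n(\mathbf{x})=\int_\Theta p_n(\mathbf{x}\mid\bm\theta)\pi(\bm\theta)d\bm\theta$. For a finite partition $\mathcal{P}=\{P_1,\dots,P_k\}$ of $\mathcal{X}_n$ with $q_j=\sum_{\mathbf{x}\in P_j}r_n(\mathbf{x})>0$, the SMML codepoint of $P_j$ is $\bm\theta_j^*=\arg\max_{\bm\theta}\sum_{\mathbf{x}\in P_j}r_n(\mathbf{x})\log p_n(\mathbf{x}\mid\bm\theta)$ and the expected codelength is $\mathcal{I}(\mathcal{P})=-\sum_j q_j\log q_j-\sum_j\sum_{\mathbf{x}\in P_j}r_n(\mathbf{x})\log p_n(\mathbf{x}\mid\bm\theta_j^* )$; an optimal SMML partition minimises $\mathcal{I}$ over the admissible partitions. $\hat{\bm\theta}(\mathbf{x})$ is the MLE. ${\bf J}_1(\bm\theta)=\mathbb{E}_{\bm\theta}[\nabla\log f(X_1\mid\bm\theta)\nabla\log f(X_1\mid\bm\theta)']$ is the per-observation Fisher information; $d_F$ is the per-observation Fisher--Rao distance, the Riemannian distance of the metric ${\bf J}_1$. Assumptions: (A1) $\Theta$ is open in $\mathbb{R}^p$. (A2) The true parameter $\bm\theta_0\in\operatorname{int}(\Theta)$.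 (A3) The support of $f(\cdot\mid\bm\theta)$ does not depend on $\bm\theta$; $\pi$ is a proper density, continuous and strictly positive near $\bm\theta_0$; $r_n(\mathbf{x})<\infty$ for all $n,\mathbf{x}$. (A4) $\bm\theta\mapsto\log p_n(\mathbf{x}\mid\bm\theta)$ is $C^3$ on $\Theta$ for each $\mathbf{x}$, and the MLE $\hat{\bm\theta}(\mathbf{x})$ exists in $\Theta$ for all data sets in the SMML cells considered. (A5) ${\bf J}_1$ exists and for every compact $K\subset\Theta$ there are $0<c_1(K)\le c_2(K)<\infty$ with $c_1(K){\bf I}_p\preceq{\bf J}_1(\bm\theta)\preceq c_2(K){\bf I}_p$ for $\bm\theta\in K$. (A6) Differentiation under the integral sign is valid where used (so that standard MLE asymptotics hold: $\|\hat{\bm\theta}(\mathbf{X}_n)-\bm\theta_0\|=O_p(n^{-1/2})$). (A7) For every compact $K\subset\Theta$ on which (A5) holds, the local mesh size $\delta_n(\bm\theta)$ of the SMML quantisation measured in $d_F$ (the Fisher--Rao diameter of the local quantisation cell, bounding $d_F(\hat{\bm\theta}(\mathbf{x}),\bm\theta_{j,n}^* )$ for $\mathbf{x}\in P_{j,n}^*$ with $\hat{\bm\theta}(\mathbf{x})\in K$) satisfies $\sup_{\bm\theta\in K}\delta_n(\bm\theta)=O(n^{-1/2})$. *)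

From HB Require Import structures.
From mathcomp Require Import all_boot all_order all_algebra.
From mathcomp Require Import all_classical all_reals all_analysis.
Set Implicit Arguments. Unset Strict Implicit. Unset Printing Implicit Defensive.
Import Order.TTheory GRing.Theory Num.Theory.
Import numFieldNormedType.Exports.
Local Open Scope classical_set_scope.
Local Open Scope ring_scope.

Section SMML.
Variables (R : realType) (p : nat) (Y : countType).
Local Notation vec := 'rV[R]_p.

Definition enorm (v : vec) : R := Num.sqrt (\sum_(i < p) v ord0 i ^+ 2).

Definition qform (A : 'M[R]_p) (v : vec) : R := (v *m A *m v^T) ord0 ord0.

(** Sum of a real family over a countable type (positive part minus negative
    part); meaningful when [rsummable h]. *)
Definition rsum (T : choiceType) (h : T -> R) : R :=
  (fine (\esum_(x in [set: T]) (Num.max (h x) 0)%:E) -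
   fine (\esum_(x in [set: T]) (Num.max (- h x) 0)%:E))%R.
Definition rsummable (T : choiceType) (h : T -> R) : Prop :=
  summable [set: T] (EFin \o h).

Definition lik (f : vec -> Y -> R) (n : nat) (x : n.-tuple Y) (th : vec) : R :=
  \prod_(i < n) f th (tnth x i).

Definition Pdata (f : vec -> Y -> R) (th : vec) (n : nat) (A : set (n.-tuple Y))
  : \bar R := \esum_(x in A) (lik f x th)%:E.

Definition partial (g : vec -> R) (i : 'I_p) (th : vec) : R :=
  derive g th (delta_mx 0 i).

Fixpoint Ck (k : nat) (U : set vec) (g : vec -> R) : Prop :=
  match k with
  | 0 => forall th, U th -> {for th, continuous g}
  | k'.+1 => (forall th, U th -> differentiable g th) /\
             (forall i, Ck k' U (partial g i))
  end.

Definition score (f : vec -> Y -> R) (y : Y) (i : 'I_p) (th : vec) : R :=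
  partial (fun t => ln (f t y)) i th.

Definition fisher1 (f : vec -> Y -> R) (th : vec) : 'M[R]_p :=
  \matrix_(i < p, j < p) rsum (fun y => f th y * score f y i th * score f y j th).

Definition fisher_exists (f : vec -> Y -> R) (Theta : set vec) : Prop :=
  forall th, Theta th -> forall i j : 'I_p,
    rsummable (fun y => f th y * score f y i th * score f y j th).

Definition C1_curve (Theta : set vec) (g : R -> vec) (a b : vec) : Prop :=
  [/\ g 0 = a, g 1 = b,
      (forall t, 0 <= t <= 1 -> Theta (g t)),
      (forall t, 0 <= t <= 1 -> derivable g t 1) &
      {within `[0, 1], continuous (derive1 g)}].

Definition fr_length (f : vec -> Y -> R) (g : R -> vec) : \bar R :=
  (\int[lebesgue_measure]_(t in `[0%R, 1%R]%classic)
     (Num.sqrt (qform (fisher1 f (g t)) (derive1 g t)))%:E)%E.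

(** Per-observation Fisher--Rao distance (Riemannian distance of the metric J_1
    on Theta); +oo if no curve joins a and b. *)
Definition fr_dist (f : vec -> Y -> R) (Theta : set vec) (a b : vec) : \bar R :=
  ereal_inf [set fr_length f g | g in [set g | C1_curve Theta g a b]].

(** Iterated Lebesgue integral over R^m of a [\bar R]-valued function of the
    coordinates; used to integrate nonnegative functions on R^p. *)
Fixpoint iint (m : nat) (G : (nat -> R) -> \bar R) : \bar R :=
  match m with
  | 0 => G (fun _ => 0)
  | m'.+1 => (\int[lebesgue_measure]_t
               iint m' (fun u => G (fun i => match i with
                                             | 0 => t
                                             | i'.+1 => u i' end)))%E
  end.

Definition leb_int (g : vec -> \bar R) : \bar R := iint p (fun u => g (\row_i u i)).

Definition prior_pred (f : vec -> Y -> R) (pi : vec -> R) (Theta : set vec)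
  (n : nat) (x : n.-tuple Y) : \bar R :=
  leb_int (fun th => (\1_Theta th * lik f x th * pi th)%:E).

(** A finite partition of X_n into k cells, given by a cell-index map c. *)
Definition cell_mass f pi Theta n k (c : n.-tuple Y -> 'I_k) (j : 'I_k) : \bar R :=
  \esum_(x in c @^-1` [set j]) prior_pred f pi Theta x.

Definition cell_loss f pi Theta n k (c : n.-tuple Y -> 'I_k) (j : 'I_k) (th : vec)
  : \bar R :=
  \esum_(x in c @^-1` [set j]) (prior_pred f pi Theta x * (- ln (lik f x th))%:E)%E.

Definition is_codepoint f pi Theta n k (c : n.-tuple Y -> 'I_k) (j : 'I_k) (th : vec)
  : Prop :=
  Theta th /\ forall th', Theta th' ->
    (cell_loss f pi Theta c j th <= cell_loss f pi Theta c j th')%E.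

Definition admissible f pi Theta n k (c : n.-tuple Y -> 'I_k) (cp : 'I_k -> vec)
  : Prop :=
  forall j, (0 < cell_mass f pi Theta c j)%E /\ is_codepoint f pi Theta c j (cp j).

Definition codelength f pi Theta n k (c : n.-tuple Y -> 'I_k) (cp : 'I_k -> vec)
  : \bar R :=
  ((\sum_(j < k) (- (fine (cell_mass f pi Theta c j) *
                     ln (fine (cell_mass f pi Theta c j))))%:E) +
   \sum_(j < k) cell_loss f pi Theta c j (cp j))%E.

Definition smml_optimal f pi Theta n k (c : n.-tuple Y -> 'I_k) (cp : 'I_k -> vec)
  : Prop :=
  admissible f pi Theta c cp /\
  forall k' (c' : n.-tuple Y -> 'I_k') (cp' : 'I_k' -> vec),
    admissible f pi Theta c' cp' ->
    (codelength f pi Theta c cp <= codelength f pi Theta c' cp')%E.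

Definition conv_in_prob (P : forall n, set (n.-tuple Y) -> \bar R)
  (T : forall n, n.-tuple Y -> vec) (th0 : vec) : Prop :=
  forall eta : R, 0 < eta ->
    (fun n => P n [set x | eta < enorm (T n x - th0)]) @ \oo --> 0%E.

Definition Op_sqrt (P : forall n, set (n.-tuple Y) -> \bar R)
  (Z : forall n, n.-tuple Y -> R) : Prop :=
  forall eps : R, 0 < eps -> exists M : R, 0 < M /\ exists N : nat,
    forall n, (N <= n)%N ->
      (P n [set x | (M < Num.sqrt n%:R * Z n x)%R] < eps%:E)%E.

End SMML.

From HB Require Import structures.
From mathcomp Require Import all_boot all_order all_algebra.
From mathcomp Require Import all_classical all_reals all_analysis.
From mathcomp Require Import measurable_realfun lra.
Import Order.TTheory GRing.Theory Num.Theory.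
Import numFieldNormedType.Exports.
Local Open Scope classical_set_scope.
Local Open Scope ring_scope.

(* The SMML codepoint of the cell of x lies within Fisher--Rao distance
   O(n^-1/2) of the MLE (A7).  Near theta0 the Fisher information dominates
   c1 I (A5), so a curve of Fisher--Rao length L < sqrt c1 * r starting within
   r of theta0 never leaves the ball of radius 2 r, and its endpoints then
   differ by at most L / sqrt c1 in every coordinate.  Hence, whenever the MLE
   is within r of theta0, the codepoint is within O(n^-1/2) of the MLE.  The
   MLE is sqrt n-consistent (A6), which also makes the event that it is farther
   than r from theta0 negligible, so the codepoint is sqrt n-consistent, and in
   particular consistent. *)

Section row_norms.
Context {R : realType} {p : nat}.
Implicit Types (u v w : 'rV[R]_p).

Lemma coord_le_mx_norm v i : `|v ord0 i| <= `|v|.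
Proof.
rewrite [leRHS]/Num.Def.normr /= mx_normrE.
exact: (le_bigmax _ (fun k : 'I_1 * 'I_p => `|v k.1 k.2|) (ord0, i)).
Qed.

Lemma mx_norm_coord v : `|v| != 0 -> exists i, `|v| = `|v ord0 i|.
Proof.
move=> /mx_norm_neq0[[i j] /= vij]; exists j.
by rewrite -(_ : i = ord0) //; apply/val_inj; case: i {vij} => [[]].
Qed.

Lemma enorm_ge0 v : 0 <= enorm v.
Proof. exact: sqrtr_ge0. Qed.

Lemma coord_le_enorm v i : `|v ord0 i| <= enorm v.
Proof.
rewrite /enorm -sqrtr_sqr ler_sqrt; last by apply: sumr_ge0 => j _; exact: sqr_ge0.
by rewrite (bigD1 i) //= lerDl; apply: sumr_ge0 => j _; exact: sqr_ge0.
Qed.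

Lemma mx_norm_le_enorm v : `|v| <= enorm v.
Proof.
have [->|/mx_norm_coord[i ->]] := eqVneq `|v| 0; first exact: enorm_ge0.
exact: coord_le_enorm.
Qed.

Lemma enorm_le_mx_norm v : enorm v <= p%:R * `|v|.
Proof.
rewrite /enorm -[X in _ <= X]ger0_norm ?mulr_ge0 // -sqrtr_sqr ler_sqrt ?sqr_ge0 //.
apply: (@le_trans _ _ (\sum_(i < p) `|v| ^+ 2)).
  apply: ler_sum => i _; rewrite -real_normK ?num_real //.
  by rewrite lerXn2r ?nnegrE ?coord_le_mx_norm.
rewrite sumr_const card_ord exprMn -[_ *+ p]mulr_natl.
apply: ler_wpM2r; first exact: sqr_ge0.
rewrite -natrX ler_nat; case: (p) => // q.
by rewrite expnS leq_pmulr // expn_gt0.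
Qed.

Lemma enorm_sub_le u v w : enorm (v - w) <= p%:R * (`|v - u| + enorm (u - w)).
Proof.
apply: le_trans (enorm_le_mx_norm _) _; rewrite ler_wpM2l //.
rewrite -(subrKA u v (- w)); apply: le_trans (ler_normD _ _) _.
by rewrite lerD2l mx_norm_le_enorm.
Qed.

Lemma sqrt_coord_le_sqrt c v i (q : R) : 0 <= c -> c * enorm v ^+ 2 <= q ->
  Num.sqrt c * `|v ord0 i| <= Num.sqrt q.
Proof.
move=> c0 cq; apply: (@le_trans _ _ (Num.sqrt c * enorm v)).
  by rewrite ler_wpM2l ?sqrtr_ge0 ?coord_le_enorm.
by rewrite -[enorm v]ger0_norm ?enorm_ge0 // -sqrtr_sqr -sqrtrM // ler_wsqrtr.
Qed.

Lemma interior_closed_ball [A : set 'rV[R]_p] [u] : interior A u ->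
  exists2 r, 0 < r & [set v | `|u - v| <= r] `<=` A.
Proof.
move=> /nbhs_closedballP[r rA]; exists r%:num => // v uv.
by apply: rA; rewrite closed_ballE.
Qed.

Lemma closed_ball_compact u r : 0 < r -> compact [set v | `|u - v| <= r].
Proof.
move=> r0; rewrite -[X in compact X](closed_ballE _ r0).
apply: bounded_closed_compact; last exact: closed_ball_closed.
exists (`|u| + r); split; first exact: num_real.
move=> M /ltW uM v; rewrite closed_ballE //= => uv; apply: le_trans uM.
by rewrite -[v](subKr u) (le_trans (ler_normB _ _)) // lerD2l.
Qed.

End row_norms.

Lemma sqrt_nat_large {R : realType} (X : R) :
  exists N, forall n, (N <= n)%N -> X < Num.sqrt n%:R.
Proof.
exists (Num.truncn (X ^+ 2)).+1 => n Nn.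
have Xn : X ^+ 2 < n%:R by rewrite -(truncn_lt_nat _ (sqr_ge0 X)).
apply: le_lt_trans (ler_norm X) _.
by rewrite -sqrtr_sqr ltr_sqrt // (le_lt_trans (sqr_ge0 X)).
Qed.

Section integral_bounds.
Context {R : realType}.

(* Needs no measurability, which is not known for the Fisher--Rao integrand. *)
Lemma ge0_le_integral_restrict d (T : measurableType d)
    (mu : {measure set T -> \bar R}) (D1 D2 : set T) (f1 f2 : T -> \bar R) :
  (forall x, D1 x -> (0 <= f1 x)%E) -> (forall x, D2 x -> (0 <= f2 x)%E) ->
  (forall x, ((f1 \_ D1) x <= (f2 \_ D2) x)%E) ->
  (\int[mu]_(x in D1) f1 x <= \int[mu]_(x in D2) f2 x)%E.
Proof.
move=> f10 f20 f12; rewrite !ge0_integralE //.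
apply: ereal_sup_le => _ [h hle <-]; exists h => //= x.
exact: le_trans (hle x) (f12 x).
Qed.

Lemma abs_sub_le_integral_derive (phi psi : R -> R) (T c : R) : 0 < T -> 0 <= c ->
  (forall t, 0 <= t <= T -> derivable phi t 1 /\ derive1 phi t = psi t) ->
  {within `[0, T], continuous psi} ->
  ((c * `|phi T - phi 0|)%:E <=
     \int[lebesgue_measure]_(t in `[0%R, T[%classic) (c * `|psi t|)%:E)%E.
Proof.
move=> T0 c0 dphi cpsi.
have mpsi : measurable_fun `[0, T] psi by exact: subspace_continuous_measurable_fun.
have mapsi : measurable_fun `[0, T] (fun t => c * `|psi t|).
  by apply: measurable_funM => //; exact: measurableT_comp.
rewrite integral_itv_bndo_bndc; last first.
  apply/measurable_EFinP; apply: measurable_funS mapsi => //.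
  by apply: subset_itvl; rewrite bnd_simp.
under eq_integral do rewrite EFinM.
rewrite ge0_integralZl_EFin //; last by apply/measurable_EFinP; exact: measurableT_comp.
rewrite EFinM; apply: lee_wpmul2l; first by rewrite lee_fin.
have dphi_oo : {in `]0, T[, forall t, derivable phi t 1}.
  by move=> t; rewrite in_itv /= => /andP[t0 tT]; have [] := dphi t; rewrite ?ltW.
have phi_cont t : 0 <= t <= T -> phi x @[x --> t] --> phi t.
  by move=> /dphi[dt _]; apply: differentiable_continuous; rewrite -derivable1_diffP.
have phi_LR : derivable_oo_LRcontinuous phi 0 T.
  split => //.
  - by apply: cvg_at_right_filter; apply: phi_cont; rewrite lexx ltW.
  - by apply: cvg_at_left_filter; apply: phi_cont; rewrite lexx ltW.
have phi'E : {in `]0, T[, derive1 phi =1 psi}.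
  by move=> t; rewrite in_itv /= => /andP[t0 tT]; have [] := dphi t; rewrite ?ltW.
rewrite -abse_EFin EFinB -(continuous_FTC2 T0 cpsi phi_LR phi'E).
by apply: le_abse_integral => //; apply/measurable_EFinP.
Qed.

End integral_bounds.

Lemma within_continuous_coord (R : realType) (T : topologicalType) m n
    (g : T -> 'M[R]_(m, n)) (A : set T) i j :
  {within A, continuous g} -> {within A, continuous (fun s => g s i j)}.
Proof.
move=> cg x.
apply: (@continuous_comp (subspace A) _ _ (g : subspace A -> _) (fun M => M i j)).
  exact: cg.
exact: coord_continuous.
Qed.

Lemma first_hitting {R : realType} (h : R -> R) {y s : R} : 0 <= s ->
  (forall t, 0 <= t <= s -> h x @[x --> t] --> h t) -> h 0 < y -> y <= h s ->
  exists2 t, 0 < t <= s & y <= h t /\ forall u, 0 <= u < t -> h u < y.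
Proof.
move=> s0 hcont h0y yhs.
pose H := [set t | 0 <= t <= s /\ y <= h t].
have lbH : has_lbound H by exists 0 => t [/andP[]].
have Hne : H !=set0 by exists s; split; rewrite ?s0 ?lexx.
pose t := inf H.
have t0 : 0 <= t by apply: lb_le_inf => // u [/andP[]].
have ts : t <= s by apply: (ge_inf lbH); split; rewrite ?s0 ?lexx.
have yht : y <= h t.
  rewrite leNgt; apply/negP => hty.
  have /cvgrPdist_lt /(_ (y - h t)) := hcont t (introT andP (conj t0 ts)).
  rewrite subr_gt0 => /(_ hty) /nbhs_ballP[e e0 He].
  have [u [/andP[u0 us] yhu] tue] := inf_adherent e0 (conj Hne lbH).
  have tu : t <= u by apply: (ge_inf lbH); split => //; rewrite u0.
  have /He /= : ball t e u.
    by rewrite -ball_normE /= distrC ger0_norm ?subr_ge0 // ltrBlDl.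
  by rewrite distrC => /(le_lt_trans (ler_norm _)); lra.
have tgt0 : 0 < t.
  by rewrite lt_neqAle t0 andbT; apply: contraTneq yht => <-; rewrite -ltNge.
exists t; first by rewrite tgt0.
split => // u /andP[u0 ut]; rewrite ltNge; apply/negP => yhu.
have Hu : H u by split; rewrite // u0 (le_trans (ltW ut) ts).
by move: (ge_inf lbH Hu); rewrite leNgt ut.
Qed.

Section fisher_rao_length.
Context {R : realType} {p : nat} {Y : countType}.
Context {f : 'rV[R]_p -> Y -> R} {Theta : set 'rV[R]_p}.

Lemma fr_length_ge0 (g : R -> 'rV[R]_p) : (0 <= fr_length f g)%E.
Proof. by apply: integral_ge0 => t _; rewrite lee_fin sqrtr_ge0. Qed.

Lemma fr_length_ge_coord {S : set 'rV[R]_p} {c1 : R} {g : R -> 'rV[R]_p} {a b : 'rV[R]_p}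
    {T : R} i :
  0 <= c1 -> (forall th, S th -> forall v, c1 * enorm v ^+ 2 <= qform (fisher1 f th) v) ->
  C1_curve Theta g a b -> 0 < T <= 1 -> (forall s, 0 <= s < T -> S (g s)) ->
  ((Num.sqrt c1 * `|g T ord0 i - g 0 ord0 i|)%:E <= fr_length f g)%E.
Proof.
move=> c10 fisherS [_ _ _ dg dg_cont] /andP[T0 T1] gS.
have sub01 t : 0 <= t <= T -> 0 <= t <= 1.
  by move=> /andP[-> tT]; exact: le_trans T1.
apply: le_trans.
  apply: (@abs_sub_le_integral_derive R (fun s => g s ord0 i)
            (fun s => derive1 g s ord0 i) T _ T0 (sqrtr_ge0 _)).
    move=> t /sub01 /dg dgt.
    split; first exact: ((derivable_mxP g t 1).1 dgt ord0 i).
    by rewrite !derive1E derive_mx // mxE.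
  apply: within_continuous_coord; apply: continuous_subspaceW dg_cont.
  by apply: subset_itvl; rewrite bnd_simp.
apply: ge0_le_integral_restrict => [x _|x _|x].
- by rewrite lee_fin mulr_ge0 ?sqrtr_ge0.
- by rewrite lee_fin sqrtr_ge0.
rewrite /patch; case: ifPn => [|_]; last by case: ifPn; rewrite lee_fin ?sqrtr_ge0.
rewrite inE /= in_itv /= => /andP[x0 xT].
rewrite ifT; last by rewrite inE /= in_itv /= x0 (le_trans (ltW xT)).
by rewrite lee_fin sqrt_coord_le_sqrt // fisherS //; apply: gS; rewrite x0.
Qed.

End fisher_rao_length.

Section short_curves.
Context {R : realType} {p : nat} {Y : countType}.
Context {f : 'rV[R]_p -> Y -> R} {Theta : set 'rV[R]_p} {theta0 : 'rV[R]_p}.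
Context {r c1 : R}.
Hypotheses (r_gt0 : 0 < r) (c1_gt0 : 0 < c1).
Hypothesis fisher_lb : forall th, `|theta0 - th| <= 2 * r ->
  forall v, c1 * enorm v ^+ 2 <= qform (fisher1 f th) v.

(* Up to its first exit time, a curve leaving the ball of radius [2 r] moves by
   at least [r] in some coordinate while staying in the ball, which costs
   Fisher--Rao length at least [sqrt c1 * r]. *)
Lemma short_curve_in_ball {g : R -> 'rV[R]_p} {a b : 'rV[R]_p} :
  C1_curve Theta g a b -> `|theta0 - a| <= r ->
  (fr_length f g < (Num.sqrt c1 * r)%:E)%E ->
  forall t, 0 <= t <= 1 -> `|theta0 - g t| < 2 * r.
Proof.
move=> Cg ha glen t /andP[t0 t1]; rewrite ltNge; apply/negP => ht.
have [g0 _ _ dg _] := Cg.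
have hcont u : 0 <= u <= t -> `|theta0 - g x| @[x --> u] --> `|theta0 - g u|.
  move=> /andP[u0 ut]; apply: cvg_norm; apply: cvgB; first exact: cvg_cst.
  apply: differentiable_continuous; rewrite -derivable1_diffP.
  by apply: dg; rewrite u0 (le_trans ut).
have h0 : `|theta0 - g 0| < 2 * r by rewrite g0; have := r_gt0; lra.
have [s /andP[s0 st] [hs inside]] :=
  first_hitting (fun u => `|theta0 - g u|) t0 hcont h0 ht.
have /mx_norm_coord[j hj] : `|theta0 - g s| != 0.
  by apply: lt0r_neq0; apply: lt_le_trans hs; rewrite mulr_gt0.
have := fr_length_ge_coord (T := s) j (ltW c1_gt0) fisher_lb Cg.
rewrite s0 (le_trans st t1) g0 => /(_ isT (fun u hu => ltW (inside u hu))).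
move=> /le_lt_trans /(_ glen).
rewrite lte_fin ltr_pM2l ?sqrtr_gt0 // => gsa.
have := coord_le_mx_norm (theta0 - a) j; rewrite !mxE => haj.
move: hs; rewrite hj !mxE => hs.
have := ler_distD (a ord0 j) (theta0 ord0 j) (g s ord0 j).
by rewrite (distrC (a ord0 j)); lra.
Qed.

Lemma short_curve_coord {g : R -> 'rV[R]_p} {a b : 'rV[R]_p} i :
  C1_curve Theta g a b -> `|theta0 - a| <= r ->
  (fr_length f g < (Num.sqrt c1 * r)%:E)%E ->
  ((Num.sqrt c1 * `|b ord0 i - a ord0 i|)%:E <= fr_length f g)%E.
Proof.
move=> Cg ha glen; have [g0 g1 _ _ _] := Cg.
rewrite -g0 -g1.
apply: (fr_length_ge_coord i (ltW c1_gt0) fisher_lb Cg).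
  by rewrite ltr01 lexx.
move=> s /andP[s0 s1]; apply: ltW.
by apply: (short_curve_in_ball Cg ha glen); rewrite s0 ltW.
Qed.

Lemma fr_dist_le_mx_norm {a b : 'rV[R]_p} {d : R} : `|theta0 - a| <= r ->
  (fr_dist f Theta a b <= d%:E)%E -> d < Num.sqrt c1 * r ->
  Num.sqrt c1 * `|b - a| <= d.
Proof.
move=> ha abd dr.
suff : ((Num.min (Num.sqrt c1 * `|b - a|) (Num.sqrt c1 * r))%:E <=
        fr_dist f Theta a b)%E.
  move=> /le_trans /(_ abd); rewrite lee_fin ge_min => /orP[//|]; lra.
apply: le_ereal_inf_tmp => _ [g Cg <-].
have [glen|] := ltP (fr_length f g) (Num.sqrt c1 * r)%:E; last first.
  by apply: le_trans; rewrite lee_fin ge_min lexx orbT.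
apply: le_trans (_ : (Num.sqrt c1 * `|b - a|)%:E <= _)%E.
  by rewrite lee_fin ge_min lexx.
have [->|/mx_norm_coord[j ->]] := eqVneq `|b - a| 0.
  by rewrite mulr0 fr_length_ge0.
by rewrite !mxE short_curve_coord.
Qed.

Lemma fr_dist_enorm_le {a b : 'rV[R]_p} {C s : R} : 0 < s -> C / s < Num.sqrt c1 * r ->
  enorm (a - theta0) <= r -> (fr_dist f Theta a b <= (C / s)%:E)%E ->
  enorm (b - theta0) <= p%:R * enorm (a - theta0) + p%:R * (C / Num.sqrt c1) / s.
Proof.
move=> s0 Cs ar abC.
have sc : 0 < Num.sqrt c1 by rewrite sqrtr_gt0.
have ar' : `|theta0 - a| <= r by rewrite distrC (le_trans (mx_norm_le_enorm _)).
have := fr_dist_le_mx_norm ar' abC Cs => ba.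
apply: le_trans (enorm_sub_le a _ _) _.
by rewrite -mulrA -mulrDr addrC ler_wpM2l // lerD2l mulrAC ler_pdivlMr // mulrC.
Qed.

End short_curves.

Lemma ge0_cvge0 {R : realType} {T : Type} (F : set_system T) {FF : Filter F}
    (u : T -> \bar R) :
  (forall t, (0 <= u t)%E) ->
  (forall eps : R, 0 < eps -> \forall t \near F, (u t < eps%:E)%E) ->
  u @ F --> 0%E.
Proof.
move=> u0 ueps.
have ufin : \forall t \near F, u t \is a fin_num.
  by apply: filterS (ueps 1 ltr01) => t ut1; rewrite ge0_fin_numE // (lt_trans ut1) ?ltry.
apply/fine_cvgP; split => //; apply/cvgrPdist_lt => eps eps0.
apply: filterS2 (ueps eps eps0) ufin => t ut utfin.
by rewrite /= sub0r normrN ger0_norm ?fine_ge0 // -lte_fin fineK.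
Qed.

Section stochastic_boundedness.
Context {R : realType} {Y : countType}.
Context {P : forall n, set (n.-tuple Y) -> \bar R}.
Hypothesis P_ge0 : forall n (A : set (n.-tuple Y)), (0 <= P n A)%E.
Hypothesis P_le : forall n (A B : set (n.-tuple Y)), A `<=` B -> (P n A <= P n B)%E.

(* Off the event [Z <= r], [sqrt n * Z] exceeds any fixed bound once [n] is large. *)
Lemma Op_sqrt_le_on {Z Z' : forall n, n.-tuple Y -> R} {c K r : R} {N : nat} :
  0 < r -> 0 <= c ->
  (forall n x, (N <= n)%N -> Z n x <= r ->
     Z' n x <= c * Z n x + K / Num.sqrt n%:R) ->
  Op_sqrt P Z -> Op_sqrt P Z'.
Proof.
move=> r0 c0 ZZ' OpZ eps eps0.
have [M [M0 [N1 HN1]]] := OpZ eps eps0.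
exists ((c + 1) * (`|K| + M)); split; first by rewrite mulr_gt0 ?ltr_wpDl.
have [N2 HN2] := sqrt_nat_large (M / r).
exists (maxn N (maxn N1 (maxn N2 1))) => n; rewrite !geq_max => /and4P[nN nN1 nN2 n1].
apply: le_lt_trans (HN1 n nN1); apply: P_le => x /= hx.
have sn : 0 < Num.sqrt n%:R :> R by rewrite sqrtr_gt0 ltr0n.
have [Zr|rZ] := leP (Z n x) r; last first.
  have := HN2 n nN2; rewrite ltr_pdivrMr // => Mr.
  by apply: lt_le_trans Mr _; rewrite ler_pM2l // ltW.
have sZ' : Num.sqrt n%:R * Z' n x <= c * (Num.sqrt n%:R * Z n x) + K.
  have -> : K = Num.sqrt n%:R * (K / Num.sqrt n%:R).
    by rewrite mulrCA divff ?mulr1 // gt_eqF.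
  by rewrite mulrCA -mulrDr ler_pM2l // ZZ'.
rewrite ltNge; apply/negP => sZM.
have cZ : c * (Num.sqrt n%:R * Z n x) <= c * M by rewrite ler_wpM2l.
have := ler_norm K; have : 0 <= c * `|K| by rewrite mulr_ge0.
rewrite mulrDl mul1r mulrDr in hx; lra.
Qed.

Lemma conv_in_prob_Op_sqrt {p : nat} (T : forall n, n.-tuple Y -> 'rV[R]_p) th0 :
  Op_sqrt P (fun n x => enorm (T n x - th0)) -> conv_in_prob P T th0.
Proof.
move=> OpT eta eta0; apply: ge0_cvge0 => // eps eps0.
have [M [M0 [N1 HN1]]] := OpT eps eps0.
have [N2 HN2] := sqrt_nat_large (M / eta).
exists (maxn N1 (maxn N2 1)) => // n /=; rewrite !geq_max => /and3P[nN1 nN2 n1].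
apply: le_lt_trans (HN1 n nN1); apply: P_le => x /= etaT.
have sn : 0 < Num.sqrt n%:R :> R by rewrite sqrtr_gt0 ltr0n.
have := HN2 n nN2; rewrite ltr_pdivrMr // => Meta.
by apply: lt_trans Meta _; rewrite ltr_pM2l.
Qed.

End stochastic_boundedness.

Section data_probability.
Context {R : realType} {p : nat} {Y : countType}.
Context {f : 'rV[R]_p -> Y -> R} {th : 'rV[R]_p}.
Hypothesis f_ge0 : forall y, 0 <= f th y.

Lemma Pdata_ge0 n (A : set (n.-tuple Y)) : (0 <= Pdata f th A)%E.
Proof. by apply: esum_ge0 => x _; rewrite lee_fin prodr_ge0. Qed.

Lemma le_Pdata n (A B : set (n.-tuple Y)) : A `<=` B -> (Pdata f th A <= Pdata f th B)%E.
Proof.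
move=> AB; rewrite /Pdata (esum_mkcond A) (esum_mkcond B).
apply: le_esum => x _; case: ifPn => xA; first by rewrite ifT // inE; apply/AB/set_mem.
by case: ifPn => _ //; rewrite lee_fin prodr_ge0.
Qed.

End data_probability.

Theorem mainTheorem5 (R : realType) (p : nat) (Y : countType)
    (f : 'rV[R]_p -> Y -> R) (pi : 'rV[R]_p -> R) (Theta : set 'rV[R]_p)
    (theta0 : 'rV[R]_p)
    (mle : forall n : nat, n.-tuple Y -> 'rV[R]_p)
    (k : nat -> nat)
    (cell : forall n : nat, n.-tuple Y -> 'I_(k n))
    (cp : forall n : nat, 'I_(k n) -> 'rV[R]_p)
    (K : set 'rV[R]_p) :
  (* parametric family: f(. | theta) is a probability mass function on Y *)
  (forall th, Theta th ->
     (forall y, 0 <= f th y) /\ (\esum_(y in [set: Y]) (f th y)%:E = 1)%E) ->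
  (* (A1) *)
  open Theta ->
  (* (A2) *)
  interior Theta theta0 ->
  (* (A3) *)
  (forall th th' y, Theta th -> Theta th' -> (0 < f th y) = (0 < f th' y)) ->
  (forall th, Theta th -> 0 <= pi th) ->
  leb_int (fun th => (\1_Theta th * pi th)%:E) = 1%E ->
  (\forall th \near theta0, {for th, continuous pi} /\ 0 < pi th) ->
  (forall n (x : n.-tuple Y), (prior_pred f pi Theta x < +oo)%E) ->
  (* (A4) *)
  (forall n (x : n.-tuple Y), Ck 3 Theta (fun th => ln (lik f x th))) ->
  (forall n (x : n.-tuple Y), Theta (mle n x) /\
     forall th, Theta th -> lik f x th <= lik f x (mle n x)) ->
  (* (A5) *)
  fisher_exists f Theta ->
  (forall K' : set 'rV[R]_p, compact K' -> K' `<=` Theta ->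
     exists c1 c2 : R, 0 < c1 <= c2 /\
       forall th, K' th -> forall v : 'rV[R]_p,
         c1 * enorm v ^+ 2 <= qform (fisher1 f th) v <= c2 * enorm v ^+ 2) ->
  (* (A6): standard MLE asymptotics *)
  Op_sqrt (Pdata f theta0) (fun n x => enorm (mle n x - theta0)) ->
  (* optimal SMML partitions with codepoints, for every n *)
  (forall n, smml_optimal f pi Theta (cell n) (cp n)) ->
  (* (A7): Fisher--Rao mesh size of the quantisation is O(n^{-1/2}) on compacts *)
  (forall K' : set 'rV[R]_p, compact K' -> K' `<=` Theta ->
     exists delta : nat -> 'rV[R]_p -> R,
       (forall n (x : n.-tuple Y), K' (mle n x) ->
          (fr_dist f Theta (mle n x) (cp n (cell n x)) <= (delta n (mle n x))%:E)%E) /\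
       exists C : R, exists N : nat, forall n, (N <= n)%N ->
          forall th, K' th -> delta n th <= C / Num.sqrt n%:R) ->
  (* the fixed compact K *)
  compact K -> K `<=` Theta -> interior K theta0 ->
  (* conclusion *)
  conv_in_prob (Pdata f theta0) (fun n x => cp n (cell n x)) theta0 /\
  Op_sqrt (Pdata f theta0) (fun n x => enorm (cp n (cell n x) - theta0)).
Proof.
(* Optimality of the partition enters only through the mesh bound (A7). *)
move=> pmf _ T0 _ _ _ _ _ _ _ _ fisher_bounds mle_rate _ mesh _ _ _.
have [rho rho0 ballT] := interior_closed_ball T0.
pose r := rho / 2; have r0 : 0 < r by rewrite divr_gt0.
pose B := [set th | `|theta0 - th| <= 2 * r].
have [BT cB] : B `<=` Theta /\ compact B.
  by rewrite /B mulrCA divff ?mulr1 //; split => //; exact: closed_ball_compact.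
have [c1 [c2 [/andP[c10 _] fisherB]]] := fisher_bounds B cB BT.
have fisher_lb th : B th -> forall v, c1 * enorm v ^+ 2 <= qform (fisher1 f th) v.
  by move=> Bth v; have /andP[] := fisherB th Bth v.
have [delta [mle_cp [C [N deltaC]]]] := mesh B cB BT.
have [N' HN'] := sqrt_nat_large (C / (Num.sqrt c1 * r)).
have cp_close n x : (maxn N (maxn N' 1) <= n)%N -> enorm (mle n x - theta0) <= r ->
    enorm (cp n (cell n x) - theta0) <=
    p%:R * enorm (mle n x - theta0) + p%:R * (C / Num.sqrt c1) / Num.sqrt n%:R.
  rewrite !geq_max => /and3P[nN nN' n1] mle_r.
  have sn : 0 < Num.sqrt n%:R :> R by rewrite sqrtr_gt0 ltr0n.
  have Bmle : B (mle n x).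
    by rewrite /B /= distrC (le_trans (mx_norm_le_enorm _)) // (le_trans mle_r); lra.
  apply: (fr_dist_enorm_le r0 c10 fisher_lb sn _ mle_r).
    by rewrite ltr_pdivrMr // mulrC -ltr_pdivrMr ?mulr_gt0 ?sqrtr_gt0 // HN'.
  by apply: le_trans (mle_cp n x Bmle) _; rewrite lee_fin deltaC.
have Ttheta0 : Theta theta0 by apply: ballT; rewrite /= subrr normr0 ltW.
have [f0_ge0 _] := pmf theta0 Ttheta0.
have cp_rate := Op_sqrt_le_on (le_Pdata f0_ge0) r0 (ler0n _ p) cp_close mle_rate.
split => //; apply: (conv_in_prob_Op_sqrt (Pdata_ge0 f0_ge0) (le_Pdata f0_ge0)).
exact: cp_rate.
Qed.
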